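(* Let $\alpha\in\mathbb C$ and $n\ge 0$ an integer. The linear span of $P_{0,\alpha},P_{1,\alpha},\ldots,P_{n,\alpha}$ coincides with the linear span $\mathcal S_{n,\alpha}$ of $I,A_\alpha,A_\alpha^2,\ldots,A_\alpha^n$ (over the same scalar field). In particular every matrix in $\mathcal S_{n,\alpha}$ can be written as $\sum_{i=0}^n a_iP_{i,\alpha}=T(a)+\sum_{i=1}^n a_iH_{i,\alpha}$ with $a(z)=a_0+\sum_{i=1}^na_i(z^i+z^{-i})$, i.e. as a symmetric banded Toeplitz matrix plus a Hankel matrix.
   Context: All matrices are semi-infinite with rows and columns indexed by the positive integers; $I$ is the semi-infinite identity and $e_1$ its first column. $T(a)$ denotes the Toeplitz matrix with $(i,j)$ entry $a_{j-i}$ for $a(z)=\sum_{i\in\mathbb Z}a_iz^i$. For $v(z)=\sum_{i\ge1}v_iz^i$, $H(v)$ is the Hankel matrix with $(i,j)$ entry $v_{i+j-1}$. $A_\alpha:=T(z+z^{-1})+\alpha e_1e_1^T$. Let $\theta=\alpha^2-1$, $h_1(z)=\alpha z$, and $h_n(z)=\theta\sum_{i=1}^{n-1}\alpha^{n-i-1}z^i+\alpha z^n$ for $n\ge2$. Define $H_{n,\alpha}=H(h_n)$, $P_{0,\alpha}=I$ and $P_{n,\alpha}=T(z^n+z^{-n})+H_{n,\alpha}$ for $n\ge1$. *)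

(* Semi-infinite matrices over a field F, represented as
   functions nat -> nat -> F.  CONVENTION: 0-based indices; the entry
   (i, j) of the Rocq function is the paper's entry (i+1, j+1). *)
From mathcomp Require Import all_boot all_algebra.
From mathcomp Require Import reals complex.
Set Implicit Arguments. Unset Strict Implicit. Unset Printing Implicit Defensive.
Import GRing.Theory Num.Theory.
Local Open Scope ring_scope.

Definition simat (F : Type) := nat -> nat -> F.

Section SemiInfinite.
Variable F : fieldType.

Definition Iinf : simat F := fun i j => if i == j then 1 else 0.

Definition E11 : simat F := fun i j => if (i == 0%N) && (j == 0%N) then 1 else 0.

Definition Toeplitz (a : int -> F) : simat F := fun i j => a (j%:Z - i%:Z).

(* H(v): paper (i,j) entry v_{i+j-1} (1-based) = v_{i+j+1} in 0-based indices;
   v given by its coefficients v : nat -> F (v 0 unused). *)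
Definition Hankel (v : nat -> F) : simat F := fun i j => v (i + j + 1)%N.

Definition zpm (n : nat) : int -> F :=
  fun k => (if k == n%:Z then 1 else 0) + (if k == - n%:Z then 1 else 0).

Definition Aalpha (alpha : F) : simat F :=
  fun i j => Toeplitz (zpm 1) i j + alpha * E11 i j.

(* coefficients of h_n: h_n(z) = theta sum_{i=1}^{n-1} alpha^{n-i-1} z^i + alpha z^n,
   theta = alpha^2 - 1 (this also gives h_1 = alpha z). *)
Definition hcoef (alpha : F) (n k : nat) : F :=
  if (1 <= k < n)%N then (alpha ^+ 2 - 1) * alpha ^+ (n - k - 1)
  else if k == n then alpha else 0.

Definition Hna (n : nat) (alpha : F) : simat F := Hankel (hcoef alpha n).

Definition Pna (n : nat) (alpha : F) : simat F :=
  if n is 0 then Iinf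
  else fun i j => Toeplitz (zpm n) i j + Hna n alpha i j.

(* Product X * Y when X has upper bandwidth <= b (X i k = 0 for k > i + b):
   then (X Y)_{ij} = sum_{k <= i + b} X_{ik} Y_{kj} is a finite sum. *)
Definition mul_band (b : nat) (X Y : simat F) : simat F :=
  fun i j => \sum_(k < (i + b).+1) X i k * Y k j.

(* A_alpha is tridiagonal (upper bandwidth 1), so A_alpha^k is computed exactly *)
Definition Apow (alpha : F) (k : nat) : simat F :=
  iter k (mul_band 1 (Aalpha alpha)) Iinf.

Definition lincomb (n : nat) (c : 'I_n.+1 -> F) (M : nat -> simat F) : simat F :=
  fun i j => \sum_(k < n.+1) c k * M k i j.

Definition in_span (n : nat) (M : nat -> simat F) (X : simat F) : Prop :=
  exists c : 'I_n.+1 -> F, X = lincomb c M.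

Definition symlaurent (n : nat) (a : 'I_n.+1 -> F) : int -> F :=
  fun m => if (`|m| <= n)%N then a (inord `|m|) else 0.

End SemiInfinite.

From mathcomp Require Import all_boot all_algebra.
From mathcomp Require Import reals complex.
From mathcomp Require Import zify ring.
From Stdlib Require Import FunctionalExtensionality.
Set Implicit Arguments. Unset Strict Implicit. Unset Printing Implicit Defensive.
Import GRing.Theory.
Local Open Scope ring_scope.

(* A_alpha acts on the matrices P_k by a Chebyshev-type three-term recurrence:
   A P_0 = P_1, A P_1 = P_2 + 2 P_0 and A P_(k+1) = P_(k+2) + P_k for k >= 1.
   Away from the first row, multiplication by T(z + z^-1) multiplies the symbol
   z^k + z^-k by z + z^-1 and shifts the Hankel part; in the first row the
   corner alpha e1 e1^T is compensated by the definition of h_k.  By induction,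
   P_0, ..., P_k and I, A, ..., A^k then span the same space. *)

Section ChebyshevBasis.
Variable F : fieldType.

Lemma simat_ext (X Y : simat F) : (forall i j, X i j = Y i j) -> X = Y.
Proof. by move=> XY; do 2!apply: functional_extensionality => ?; apply: XY. Qed.

Section Span.
Variable M : nat -> simat F.

Lemma in_span0 m : in_span m M (fun _ _ => 0).
Proof. by exists (fun _ => 0); apply: simat_ext => i j; rewrite /lincomb big1 // => k _; rewrite mul0r. Qed.

Lemma in_spanDZ m X Y b : in_span m M X -> in_span m M Y ->
  in_span m M (fun i j => X i j + b * Y i j).
Proof.
move=> [c ->] [d ->]; exists (fun k => c k + b * d k); apply: simat_ext => i j.
rewrite /lincomb mulr_sumr -big_split; apply: eq_bigr => k _ /=; ring.
Qed.

Lemma in_span_gen m k : (k <= m)%N -> in_span m M (M k).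
Proof.
move=> km; exists (fun l => (val l == k)%:R); apply: simat_ext => i j.
rewrite /lincomb (bigD1 (Ordinal (km : k < m.+1)%N)) //= eqxx mul1r big1 ?addr0 //.
by move=> l /eqP neq_lk; case: eqP => [l_k|]; rewrite ?mul0r //; case: neq_lk; apply: val_inj.
Qed.

Lemma in_span_widen m p X : (m <= p)%N -> in_span m M X -> in_span p M X.
Proof.
move=> mp [c ->]; exists (fun k => if (k < m.+1)%N then c (inord k) else 0).
apply: simat_ext => i j; rewrite /lincomb.
rewrite (eq_bigr (fun k : 'I_m.+1 => c (inord k) * M k i j)) => [|k _]; last by rewrite inord_val.
rewrite (big_ord_widen p.+1 (fun k => c (inord k) * M k i j)) // big_mkcond.
by apply: eq_bigr => k _; case: ifP; rewrite ?mul0r.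
Qed.

Lemma in_span_lincomb m p (c : 'I_p.+1 -> F) (N : nat -> simat F) :
  (forall k, (k <= p)%N -> in_span m M (N k)) -> in_span m M (lincomb c N).
Proof.
elim: p c => [|p IHp] c inN.
  have -> : lincomb c N = fun i j => 0 + c ord0 * N 0%N i j.
    by apply: simat_ext => i j; rewrite /lincomb big_ord1 add0r.
  exact: in_spanDZ (in_span0 m) (inN 0%N isT).
have -> : lincomb c N = fun i j =>
    lincomb (fun k : 'I_p.+1 => c (widen_ord (leqnSn _) k)) N i j + c ord_max * N p.+1 i j.
  by apply: simat_ext => i j; rewrite /lincomb big_ord_recr.
by apply: in_spanDZ; [apply: IHp => k kp; apply: inN; lia | apply: inN].
Qed.

End Span.

Lemma symlaurentE n (a : 'I_n.+1 -> F) (m : int) :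
  symlaurent a m = \sum_(k < n.+1) a k * (`|m|%N == k)%:R.
Proof.
rewrite /symlaurent; case: leqP => [mn|nm]; last first.
  by rewrite big1 // => k _; rewrite gtn_eqF ?mulr0 // (leq_trans (ltn_ord k)).
rewrite (bigD1 (inord `|m|)) //= inordK // eqxx mulr1 big1 ?addr0 // => k /eqP neq_k.
suff /negbTE -> : `|m|%N != k by rewrite mulr0.
by apply/eqP => Ek; apply: neq_k; apply: val_inj; rewrite /= inordK // Ek.
Qed.

Lemma zpm_rec m (d : int) :
  zpm F m.+1 (d + 1) + zpm F m.+1 (d - 1) = zpm F m.+2 d + zpm F m d.
Proof. by rewrite /zpm; do ![case: eqP => ?]; rewrite ?addr0 ?add0r //; lia. Qed.

Lemma zpm_absz m (d : int) : (0 < m)%N -> zpm F m d = (`|d|%N == m)%:R.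
Proof. by move=> m_gt0; rewrite /zpm; do ![case: eqP => ?]; rewrite ?addr0 ?add0r //; lia. Qed.

Section Alpha.
Variable alpha : F.
Local Notation h := (hcoef alpha).
Local Notation mulA := (mul_band 1 (Aalpha alpha)).

Lemma hcoef_lt n k : (0 < k < n)%N -> h n k = (alpha ^+ 2 - 1) * alpha ^+ (n - k - 1).
Proof. by rewrite /hcoef => ->. Qed.

Lemma hcoef_diag n : h n n = alpha.
Proof. by rewrite /hcoef ltnn andbF eqxx. Qed.

Lemma hcoef_gt n k : (n < k)%N -> h n k = 0.
Proof. by move=> nk; rewrite /hcoef ifF ?gtn_eqF //; lia. Qed.

Lemma hcoef_shift n k : (0 < k)%N -> h n.+1 k.+1 = h n k.
Proof. by move=> k_gt0; rewrite /hcoef ltnS k_gt0 eqSS. Qed.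

Lemma hcoefS n k : (0 < k)%N ->
  h n.+1 k = alpha * h n k + alpha * (k == n.+1)%:R - (k == n)%:R.
Proof.
move=> k_gt0; have [kn|nk|<-] := ltngtP k n; rewrite /=.
- rewrite !hcoef_lt; try lia.
  rewrite (ltn_eqF (leqW kn)) /=.
  by rewrite (_ : n.+1 - k - 1 = (n - k - 1).+1)%N ?exprS; [ring | lia].
- rewrite (hcoef_gt nk); have [->|n1k] : k = n.+1 \/ (n.+1 < k)%N by lia.
    by rewrite hcoef_diag eqxx /=; ring.
  by rewrite hcoef_gt // gtn_eqF //=; ring.
- by rewrite hcoef_lt ?k_gt0 ?ltnSn // hcoef_diag ltn_eqF //= subSnn subnn expr0; ring.
Qed.

Lemma AalphaE i l : Aalpha alpha i l =
  (l == i.+1)%:R + (i == l.+1)%:R + (if (i == 0%N) && (l == 0%N) then alpha else 0).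
Proof.
rewrite /Aalpha /Toeplitz /E11 /zpm.
by do ![case: eqP => ?]; rewrite /= ?mulr1 ?mulr0 ?addr0 ?add0r //; lia.
Qed.

Lemma mulAE X i j : mulA X i j =
  (if i is i'.+1 then X i' j else 0) + X i.+1 j + (if i == 0%N then alpha * X 0%N j else 0).
Proof.
rewrite /mul_band addn1; case: i => [|i].
  by rewrite !big_ord_recr big_ord0 /= !AalphaE /=; ring.
rewrite !big_ord_recr /= big1 => [|l _]; last first.
  have := ltn_ord l; rewrite AalphaE.
  by do ![case: eqP => ?]; rewrite /= ?addr0 ?mul0r //; lia.
by rewrite !AalphaE; do ![case: eqP => ?]; try lia; rewrite /=; ring.
Qed.

(* Q_k := T(z^k + z^-k) + H(h_k) equals P_k for k >= 1, while Q_0 = 2 I; with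
   this normalisation A_alpha Q_(k+1) = Q_(k+2) + Q_k holds for every k. *)
Definition Qna k : simat F := fun i j => Toeplitz (zpm F k) i j + Hna k alpha i j.

Lemma mulA_Qna k : mulA (Qna k.+1) = fun i j => Qna k.+2 i j + Qna k i j.
Proof.
apply: simat_ext => i j; rewrite mulAE /Qna /Hna /Hankel /Toeplitz !addn1 !addSn.
case: i => [|i] /=.
  (* In row 0 the corner term alpha e1 e1^T is absorbed by hcoefS, i.e. by
     h_(k+2) = alpha h_(k+1) + alpha z^(k+2) - z^(k+1). *)
  rewrite add0r !subr0 !add0n hcoef_shift // (hcoefS k.+1) // !eqSS.
  have -> : zpm F k.+2 j = zpm F k.+1 (j%:Z + 1) + zpm F k.+1 (j%:Z - 1) - zpm F k j.
    by rewrite zpm_rec; ring.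
  by rewrite -PoszD addn1 !(zpm_absz (m := k.+1)) //= eqSS; ring.
rewrite !addSn addn1 addr0 addrACA [RHS]addrACA.
have -> : j%:Z - i%:Z = (j%:Z - i.+1%:Z) + 1 by lia.
have -> : j%:Z - i.+2%:Z = (j%:Z - i.+1%:Z) - 1 by lia.
by rewrite zpm_rec (hcoef_shift k.+1 (k := (i + j).+1)) // (hcoef_shift k (k := (i + j).+2)).
Qed.

Lemma mulA_Iinf : mulA (Iinf F) = Aalpha alpha.
Proof.
apply: simat_ext => i j; rewrite mulAE AalphaE /Iinf.
by case: i => [|i]; do ![case: eqP => ?]; try lia; rewrite /=; ring.
Qed.

Lemma Aalpha_Pna1 : Aalpha alpha = Pna 1 alpha.
Proof.
apply: simat_ext => i j; rewrite /Aalpha /Pna /Hna /Hankel /E11 addn1 (hcoefS 0) //.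
rewrite hcoef_gt // eqSS; congr (_ + _).
by do ![case: eqP => ?]; try lia; rewrite /=; ring.
Qed.

Lemma Qna0 : Qna 0 = fun i j => 2 * Pna 0 alpha i j.
Proof.
apply: simat_ext => i j; rewrite /Qna /Hna /Hankel addn1 hcoef_gt // addr0 /Toeplitz /zpm /Pna /Iinf.
by do ![case: eqP => ?]; try lia; rewrite /=; ring.
Qed.

Lemma mulA_PnaS k : mulA (Pna k.+1 alpha) =
  fun i j => Pna k.+2 alpha i j + (if k is 0 then 2 else 1) * Pna k alpha i j.
Proof. by rewrite mulA_Qna; case: k => [|k]; rewrite ?Qna0 //; apply: simat_ext => i j; rewrite mul1r. Qed.

Lemma mulA_lincomb p (c : 'I_p.+1 -> F) (N : nat -> simat F) :
  mulA (lincomb c N) = lincomb c (fun k => mulA (N k)).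
Proof.
apply: simat_ext => i j; rewrite /mul_band /lincomb.
under eq_bigr do rewrite mulr_sumr.
by rewrite exchange_big; apply: eq_bigr => k _; rewrite mulr_sumr; apply: eq_bigr => l _; ring.
Qed.

Local Notation P := (fun k => Pna k alpha).

Lemma mulA_Pna_in_span k : in_span k.+1 P (mulA (Pna k alpha)).
Proof.
case: k => [|k]; first by rewrite mulA_Iinf Aalpha_Pna1; apply: in_span_gen.
by rewrite mulA_PnaS; apply: in_spanDZ; apply: in_span_gen => //; lia.
Qed.

Lemma Apow_in_span_Pna k : in_span k P (Apow alpha k).
Proof.
elim: k => [|k [c IHk]]; first exact: (in_span_gen P (leqnn 0)).
rewrite [Apow _ _]/= -/(Apow alpha k) IHk mulA_lincomb.
by apply: in_span_lincomb => l lk; apply: in_span_widen (mulA_Pna_in_span l).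
Qed.

Lemma mulA_in_span_Apow m X : in_span m (Apow alpha) X -> in_span m.+1 (Apow alpha) (mulA X).
Proof.
move=> [c ->]; rewrite mulA_lincomb; apply: in_span_lincomb => k km.
exact: (in_span_gen (Apow alpha) (km : k.+1 <= m.+1)%N).
Qed.

Lemma Pna_in_span_Apow k : in_span k (Apow alpha) (Pna k alpha).
Proof.
suff: in_span k (Apow alpha) (Pna k alpha) /\ in_span k.+1 (Apow alpha) (Pna k.+1 alpha) by case.
elim: k => [|k [IHk IHk1]].
  have P0 : in_span 0 (Apow alpha) (Pna 0 alpha) := in_span_gen (Apow alpha) (leqnn 0).
  by split=> //; rewrite -Aalpha_Pna1 -mulA_Iinf; apply: mulA_in_span_Apow.
split=> //; set b : F := if k is 0 then 2 else 1.
have -> : Pna k.+2 alpha = fun i j => mulA (Pna k.+1 alpha) i j + (- b) * Pna k alpha i j.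
  by apply: simat_ext => i j; rewrite mulA_PnaS -/b; ring.
apply: in_spanDZ; first exact: mulA_in_span_Apow.
exact: in_span_widen (leqW (leqnSn k)) IHk.
Qed.

Lemma Pna_entry k i j : Pna k alpha i j =
  (`|j%:Z - i%:Z|%N == k)%:R + (if (1 <= k)%N then Hna k alpha i j else 0).
Proof.
case: k => [|k] /=; last by rewrite /Toeplitz zpm_absz.
by rewrite /Iinf addr0; do ![case: eqP => ?] => //; lia.
Qed.

Lemma lincomb_Pna n (a : 'I_n.+1 -> F) : lincomb a P = fun i j =>
  Toeplitz (symlaurent a) i j + \sum_(k < n.+1 | (1 <= k)%N) a k * Hna k alpha i j.
Proof.
apply: simat_ext => i j; rewrite /lincomb /Toeplitz symlaurentE [X in _ = _ + X]big_mkcond -big_split /=.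
by apply: eq_bigr => k _; rewrite Pna_entry mulrDr; case: ifP; rewrite ?mulr0.
Qed.

End Alpha.
End ChebyshevBasis.

Theorem corollary5 (R : realType) (alpha : R[i]) (n : nat) :
  (forall X : simat R[i],
      in_span n (fun k => Pna k alpha) X <-> in_span n (Apow alpha) X)
  /\
  (forall a : 'I_n.+1 -> R[i],
      lincomb a (fun k => Pna k alpha) =
      (fun i j => Toeplitz (symlaurent a) i j
                  + \sum_(k < n.+1 | (1 <= k)%N) a k * Hna k alpha i j)).
Proof.
split=> [X|a]; last exact: lincomb_Pna.
split=> -[c ->]; apply: in_span_lincomb => k kn.
  exact: in_span_widen kn (Pna_in_span_Apow alpha k).
exact: in_span_widen kn (Apow_in_span_Pna alpha k).
Qed.
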